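(* Let $\varrho=\sum_{\omega\in\Omega}\varrho(\omega)|\omega\rangle\langle\omega|$ and $\sigma=\sum_{\omega\in\Omega}\sigma(\omega)|\omega\rangle\langle\omega|$ be commuting density operators, diagonal in a common orthonormal basis $(|\omega\rangle)_{\omega\in\Omega}$ of a finite-dimensional Hilbert space. The following are equivalent: (1) $D_\alpha^{\mathrm{test}}(\varrho\|\sigma)=D_\alpha(\varrho\|\sigma)$ for all $\alpha\in(0,1)$; (2) $D_\alpha^{\mathrm{test}}(\varrho\|\sigma)=D_\alpha(\varrho\|\sigma)$ for some $\alpha\in(0,1)$; (3) there is $\Omega_0\subseteq\Omega$, with $\Omega_1:=\Omega\setminus\Omega_0$, such that $\sigma(\Omega_0)\varrho(\omega)=\varrho(\Omega_0)\sigma(\omega)$ for $\omega\in\Omega_0$ and $\sigma(\Omega_1)\varrho(\omega)=\varrho(\Omega_1)\sigma(\omega)$ for $\omega\in\Omega_1$. Moreover, if these hold then $D_\alpha^{\mathrm{test}}(\varrho\|\sigma)=\hat D_\alpha^{\mathrm{test}}(\varrho\|\sigma)=D_\alpha(\varrho\|\sigma)$ for all $\alpha\in(0,1)$.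
   Context: $\varrho(\Omega_0):=\sum_{\omega\in\Omega_0}\varrho(\omega)$, etc. For probability vectors $p,q$ and $\alpha\in(0,1)$, $D_\alpha(p\|q)=\frac{1}{\alpha-1}\log\sum_xp(x)^\alpha q(x)^{1-\alpha}$; for commuting states $D_\alpha(\varrho\|\sigma)$ is the classical divergence of the eigenvalue vectors. A test is an operator $0\le T\le I$; $\mathcal T(X):=(\operatorname{Tr}XT,\operatorname{Tr}X(I-T))$; $D_\alpha^{\mathrm{test}}(\varrho\|\sigma):=\max_{0\le T\le I}D_\alpha(\mathcal T(\varrho)\|\mathcal T(\sigma))$; $\hat D_\alpha^{\mathrm{test}}:=\sup_n\frac1nD_\alpha^{\mathrm{test}}(\varrho^{\otimes n}\|\sigma^{\otimes n})$. *)

From HB Require Import structures.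
From mathcomp Require Import all_boot all_order all_algebra.
From mathcomp Require Import all_classical all_reals ereal exp.
From mathcomp Require Import complex mxtens.

Set Implicit Arguments.
Unset Strict Implicit.
Unset Printing Implicit Defensive.

Import Order.TTheory GRing.Theory Num.Theory.
Local Open Scope ring_scope.
Local Open Scope classical_set_scope.

Section QuantumRenyi.
Variable R : realType.
Local Notation C := (R[i]).

Definition is_prob (I : finType) (p : I -> R) : Prop :=
  (forall x, 0 <= p x) /\ \sum_(x : I) p x = 1.

(** classical Renyi divergence
    D_a(p||q) = 1/(a-1) log sum_x p(x)^a q(x)^(1-a),
    with values in [0,+oo]: log 0 = -oo, so for a in (0,1) the value is +oo
    when the sum vanishes. *)
Definition renyi (I : finType) (a : R) (p q : I -> R) : \bar R :=
  let s := \sum_(x : I) (p x `^ a * q x `^ (1 - a)) in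
  if s == 0 then +oo%E else (((a - 1)^-1 * ln s)%:E).

Definition adjmx m n (A : 'M[C]_(m, n)) : 'M[C]_(n, m) := map_mx Num.conj A^T.

Definition psdmx n (A : 'M[C]_n) : Prop :=
  adjmx A = A /\ forall v : 'rV[C]_n, 0 <= (v *m A *m adjmx v) 0 0.

Definition is_test n (T : 'M[C]_n) : Prop := psdmx T /\ psdmx (1%:M - T).

(** the binary measurement map  X |-> (Tr X T, Tr X (I - T))  (real parts;
    these traces are real for X, T Hermitian) *)
Definition test_dist n (X T : 'M[C]_n) : bool -> R :=
  fun b => if b then complex.Re (\tr (X *m T)) else complex.Re (\tr (X *m (1%:M - T))).

Definition Dtest n (rho sigma : 'M[C]_n) (a : R) : \bar R :=
  ereal_sup [set renyi a (test_dist rho T) (test_dist sigma T) | T in is_test (n:=n)].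

Definition Dtest_hat n (rho sigma : 'M[C]_n) (a : R) : \bar R :=
  ereal_sup [set (((k.+1)%:R^-1 : R)%:E *
                 Dtest (ntensmx rho k.+1) (ntensmx sigma k.+1) a)%E | k in [set: nat]].

Definition diag_state d (p : 'I_d -> R) : 'M[C]_d :=
  diag_mx (\row_i ((p i)%:C)%C).

End QuantumRenyi.

From HB Require Import structures.
From mathcomp Require Import all_boot all_order all_algebra.
From mathcomp Require Import all_classical all_reals ereal exp.
From mathcomp Require Import complex mxtens.
From mathcomp Require Import sequences ring lra.

(* For commuting states only diagonal tests matter, i.e. vectors t in [0,1]^d.
   D_a is a decreasing function of the overlap Q_a(p,q) = \sum_x p x ^ a q x ^ (1-a),
   so D_a^test is governed by the minimum over t of the overlap of the two binary
   outcome distributions. That overlap is concave in t, hence minimal at the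
   indicator of some set Om0. Hoelder's inequality for the weighted geometric
   mean bounds Q_a(p,q) by the overlap of every test, with equality for the test
   of Om0 iff p and q are proportional on Om0 and on its complement. Finally Q_a is
   multiplicative under tensor powers, which squeezes the regularized quantity
   between D_a^test and D_a. *)

Set Implicit Arguments.
Unset Strict Implicit.
Unset Printing Implicit Defensive.

Import Order.TTheory GRing.Theory Num.Theory.
Local Open Scope ring_scope.

Section WeightedGeometricMean.
Variable R : realType.
Implicit Types a c u v x y : R.

Definition gmean a u v : R := u `^ a * v `^ (1 - a).

Lemma gmean_ge0 a u v : 0 <= gmean a u v.
Proof. by rewrite mulr_ge0 ?powR_ge0. Qed.

Lemma gmeanxx a u : 0 <= u -> gmean a u u = u.
Proof. by move=> u0; rewrite /gmean -powRD addrC subrK ?oner_eq0 ?powRr1. Qed.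

Lemma gmean0l a v : 0 < a -> gmean a 0 v = 0.
Proof. by move=> a0; rewrite /gmean powR0 ?mul0r ?gt_eqF. Qed.

Lemma gmean0r a u : a < 1 -> gmean a u 0 = 0.
Proof. by move=> a1; rewrite /gmean powR0 ?mulr0 // subr_eq0 eq_sym lt_eqF. Qed.

Lemma gmeanMM a c c' u v : 0 <= c -> 0 <= c' -> 0 <= u -> 0 <= v ->
  gmean a (c * u) (c' * v) = gmean a c c' * gmean a u v.
Proof. by move=> *; rewrite /gmean !powRM // mulrACA. Qed.

Lemma gmeanZ a c u v : 0 <= c -> 0 <= u -> 0 <= v ->
  gmean a (c * u) (c * v) = c * gmean a u v.
Proof. by move=> c0 u0 v0; rewrite gmeanMM // gmeanxx. Qed.

Lemma expR_tangent_lt x y : y != x -> expR x * (1 + (y - x)) < expR y.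
Proof.
move=> yx; rewrite -[in X in _ < X](subrK x y) expRD mulrC ltr_pM2r ?expR_gt0 //.
by rewrite expR_gt1Dx // subr_eq0.
Qed.

Lemma gmean_lt_mean a u v : 0 < a < 1 -> 0 <= u -> 0 <= v -> u != v ->
  gmean a u v < a * u + (1 - a) * v.
Proof.
move=> /andP[a0 a1] u0 v0 uv; have a1' : 0 < 1 - a by rewrite subr_gt0.
have [u_eq0|u_neq0] := eqVneq u 0.
  move: uv; rewrite u_eq0 gmean0l // mulr0 add0r eq_sym => v_neq0.
  by rewrite mulr_gt0 // lt_def v_neq0.
have [v_eq0|v_neq0] := eqVneq v 0.
  move: uv; rewrite v_eq0 gmean0r // mulr0 addr0 => u_neq0'.
  by rewrite mulr_gt0 // lt_def u_neq0'.
have [u_gt0 v_gt0] : 0 < u /\ 0 < v by rewrite !lt_def u_neq0 v_neq0.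
(* Compare u and v with the tangent to expR at the weighted mean m of their logarithms. *)
pose m := a * ln u + (1 - a) * ln v.
have ln_neq : ln u != ln v.
  by apply: contra uv => /eqP e; rewrite -(lnK u_gt0) -(lnK v_gt0) e.
have -> : gmean a u v = a * (expR m * (1 + (ln u - m))) + (1 - a) * (expR m * (1 + (ln v - m))).
  rewrite /gmean /powR (negbTE u_neq0) (negbTE v_neq0) -expRD /m.
  by rewrite !(mulrC _ (ln _)); ring.
rewrite -[u in X in _ < X](lnK u_gt0) -[v in X in _ < X](lnK v_gt0).
have lnu_m : ln u - m = (1 - a) * (ln u - ln v) by rewrite /m; ring.
have lnv_m : ln v - m = a * (ln v - ln u) by rewrite /m; ring.
rewrite ltrD // ltr_pM2l // expR_tangent_lt // -subr_eq0 ?lnu_m ?lnv_m.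
  by rewrite mulf_neq0 ?(gt_eqF a1') // subr_eq0.
by rewrite mulf_neq0 ?(gt_eqF a0) // subr_eq0 eq_sym.
Qed.

Lemma gmean_le_mean a u v : 0 < a < 1 -> 0 <= u -> 0 <= v ->
  gmean a u v <= a * u + (1 - a) * v.
Proof.
move=> a01 u0 v0; have [->|uv] := eqVneq u v; last exact/ltW/gmean_lt_mean.
by rewrite gmeanxx // -mulrDl addrC subrK mul1r.
Qed.

End WeightedGeometricMean.

Section Hoelder.
Variables (R : realType) (I : finType) (a : R).
Hypothesis a01 : 0 < a < 1.
Implicit Types (A : {set I}) (u v x y : I -> R).

Definition proportional_on x y A :=
  forall w, w \in A -> (\sum_(i in A) y i) * x w = (\sum_(i in A) x i) * y w.

Lemma sum_gmean_le1 A u v : (forall i, 0 <= u i) -> (forall i, 0 <= v i) ->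
  \sum_(i in A) u i = 1 -> \sum_(i in A) v i = 1 ->
  \sum_(i in A) gmean a (u i) (v i) <= 1.
Proof.
move=> u0 v0 su sv; apply: (@le_trans _ _ (\sum_(i in A) (a * u i + (1 - a) * v i))).
  by apply: ler_sum => i _; apply: gmean_le_mean.
by rewrite big_split /= -!mulr_sumr su sv !mulr1 subrKC.
Qed.

Lemma sum_gmean_eq1 A u v : (forall i, 0 <= u i) -> (forall i, 0 <= v i) ->
  \sum_(i in A) u i = 1 -> \sum_(i in A) v i = 1 ->
  \sum_(i in A) gmean a (u i) (v i) = 1 -> {in A, u =1 v}.
Proof.
move=> u0 v0 su sv s1 w wA.
have gap_ge0 i : i \in A -> 0 <= a * u i + (1 - a) * v i - gmean a (u i) (v i).
  by move=> _; rewrite subr_ge0 gmean_le_mean.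
have gap_sum : \sum_(i in A) (a * u i + (1 - a) * v i - gmean a (u i) (v i)) = 0.
  by rewrite sumrB big_split /= -!mulr_sumr su sv s1 !mulr1 subrKC subrr.
have /eqP := psumr_eq0P gap_ge0 gap_sum wA; rewrite subr_eq0 => /eqP gap0.
apply/eqP; apply: contraT => uv.
by have := gmean_lt_mean a01 (u0 w) (v0 w) uv; rewrite -gap0 ltxx.
Qed.

Lemma sum_gmean_normalize A x y : (forall i, 0 <= x i) -> (forall i, 0 <= y i) ->
  0 < \sum_(i in A) x i -> 0 < \sum_(i in A) y i ->
  \sum_(i in A) gmean a (x i) (y i) =
  gmean a (\sum_(i in A) x i) (\sum_(i in A) y i) *
  \sum_(i in A) gmean a (x i / \sum_(j in A) x j) (y i / \sum_(j in A) y j).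
Proof.
move=> x0 y0 sx sy; rewrite mulr_sumr; apply: eq_bigr => i _.
by rewrite -gmeanMM ?divr_ge0 ?(ltW sx) ?(ltW sy) // !(mulrC (\sum_(j in A) _)) !divfK ?gt_eqF.
Qed.

Lemma hoelder_gmean_degenerate A x y : (forall i, 0 <= x i) -> (forall i, 0 <= y i) ->
  (\sum_(i in A) x i == 0) || (\sum_(i in A) y i == 0) ->
  \sum_(i in A) gmean a (x i) (y i) = gmean a (\sum_(i in A) x i) (\sum_(i in A) y i) /\
  proportional_on x y A.
Proof.
case/andP: a01 => a0 a1 x0 y0 /orP[] /eqP s0.
  have xA0 := psumr_eq0P (fun i _ => x0 i) s0.
  rewrite s0 gmean0l // big1 => [|i iA]; last by rewrite xA0 // gmean0l.
  by split => // w wA; rewrite xA0 // s0 mulr0 mul0r.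
have yA0 := psumr_eq0P (fun i _ => y0 i) s0.
rewrite s0 gmean0r // big1 => [|i iA]; last by rewrite yA0 // gmean0r.
by split => // w wA; rewrite yA0 // s0 mulr0 mul0r.
Qed.

Lemma hoelder_gmean A x y : (forall i, 0 <= x i) -> (forall i, 0 <= y i) ->
  \sum_(i in A) gmean a (x i) (y i) <= gmean a (\sum_(i in A) x i) (\sum_(i in A) y i).
Proof.
move=> x0 y0; have [deg|] := boolP ((\sum_(i in A) x i == 0) || (\sum_(i in A) y i == 0)).
  by rewrite (proj1 (hoelder_gmean_degenerate x0 y0 deg)).
rewrite negb_or => /andP[sx sy].
have [sx_gt0 sy_gt0] : 0 < \sum_(i in A) x i /\ 0 < \sum_(i in A) y i.
  by rewrite !lt_def sx sy !sumr_ge0.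
rewrite sum_gmean_normalize // ler_piMr ?gmean_ge0 // sum_gmean_le1 //.
- by move=> i; rewrite divr_ge0 ?(ltW sx_gt0).
- by move=> i; rewrite divr_ge0 ?(ltW sy_gt0).
- by rewrite -mulr_suml divff.
- by rewrite -mulr_suml divff.
Qed.

Lemma hoelder_gmean_eqP A x y : (forall i, 0 <= x i) -> (forall i, 0 <= y i) ->
  \sum_(i in A) gmean a (x i) (y i) = gmean a (\sum_(i in A) x i) (\sum_(i in A) y i) <->
  proportional_on x y A.
Proof.
move=> x0 y0; have [deg|] := boolP ((\sum_(i in A) x i == 0) || (\sum_(i in A) y i == 0)).
  by have [eq_deg prop_deg] := hoelder_gmean_degenerate x0 y0 deg.
rewrite negb_or => /andP[sx sy].
have [sx_gt0 sy_gt0] : 0 < \sum_(i in A) x i /\ 0 < \sum_(i in A) y i.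
  by rewrite !lt_def sx sy !sumr_ge0.
rewrite sum_gmean_normalize //.
pose u i := x i / \sum_(j in A) x j; pose v i := y i / \sum_(j in A) y j.
have u0 i : 0 <= u i by rewrite divr_ge0 ?(ltW sx_gt0).
have v0 i : 0 <= v i by rewrite divr_ge0 ?(ltW sy_gt0).
have su : \sum_(i in A) u i = 1 by rewrite -mulr_suml divff.
have sv : \sum_(i in A) v i = 1 by rewrite -mulr_suml divff.
have G_neq0 : gmean a (\sum_(i in A) x i) (\sum_(i in A) y i) != 0.
  by rewrite gt_eqF // mulr_gt0 ?powR_gt0.
split => [E w wA | prop].
  have s1 : \sum_(i in A) gmean a (u i) (v i) = 1.
    by apply: (mulfI G_neq0); rewrite mulr1; exact: E.
  have /eqP := sum_gmean_eq1 u0 v0 su sv s1 wA.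
  by rewrite /u /v eqr_div // mulrC => /eqP ->; rewrite mulrC.
have vu : {in A, v =1 u}.
  move=> i iA; apply/eqP; rewrite eqr_div // [y i * _]mulrC -(prop i iA).
  by rewrite mulrC.
rewrite -[RHS]mulr1 -su; congr (_ * _); apply: eq_bigr => i iA.
by rewrite -[y i / _]/(v i) vu //; apply: gmeanxx (u0 i).
Qed.

End Hoelder.

Lemma gmean_concave (R : realType) (a l x1 y1 x2 y2 : R) : 0 < a < 1 -> 0 <= l <= 1 ->
  0 <= x1 -> 0 <= y1 -> 0 <= x2 -> 0 <= y2 ->
  l * gmean a x1 y1 + (1 - l) * gmean a x2 y2 <=
  gmean a (l * x1 + (1 - l) * x2) (l * y1 + (1 - l) * y2).
Proof.
move=> a01 /andP[l0 l1] x10 y10 x20 y20; have l1' : 0 <= 1 - l by rewrite subr_ge0.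
pose x b := if b then l * x1 else (1 - l) * x2.
pose y b := if b then l * y1 else (1 - l) * y2.
have x0 b : 0 <= x b by case: b; rewrite mulr_ge0.
have y0 b : 0 <= y b by case: b; rewrite mulr_ge0.
have := hoelder_gmean a01 [set: bool]%SET x0 y0.
by rewrite !(eq_bigl _ _ (@finset.in_setT bool)) !big_bool /= !gmeanZ.
Qed.

Definition overlap (R : realType) (I : finType) (a : R) (p q : I -> R) : R :=
  \sum_i gmean a (p i) (q i).

Lemma overlap_concave (R : realType) (I : finType) (a l : R) (p1 q1 p2 q2 : I -> R) :
  0 < a < 1 -> 0 <= l <= 1 ->
  (forall i, 0 <= p1 i) -> (forall i, 0 <= q1 i) ->
  (forall i, 0 <= p2 i) -> (forall i, 0 <= q2 i) ->
  l * overlap a p1 q1 + (1 - l) * overlap a p2 q2 <=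
  overlap a (fun i => l * p1 i + (1 - l) * p2 i) (fun i => l * q1 i + (1 - l) * q2 i).
Proof.
move=> a01 l01 p10 q10 p20 q20; rewrite /overlap !mulr_sumr -big_split /=.
by apply: ler_sum => i _; apply: gmean_concave.
Qed.

Section ClassicalTests.
Variables (R : realType) (I : finType).
Implicit Types (A : {set I}) (p q t u v : I -> R).

Definition is_ctest t := forall i, 0 <= t i <= 1.

Definition indicator A : I -> R := fun i => (i \in A)%:R.

Definition test_prob p t : bool -> R :=
  fun b => \sum_i p i * (if b then t i else 1 - t i).

Definition cDtest (a : R) p q : \bar R :=
  ereal_sup [set renyi a (test_prob p t) (test_prob q t) | t in is_ctest].

Lemma is_ctest_indicator A : is_ctest (indicator A).
Proof. by move=> i; rewrite /indicator; case: (i \in A); rewrite ?lexx ?ler01. Qed.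

Lemma test_prob_ge0 p t : (forall i, 0 <= p i) -> is_ctest t -> forall b, 0 <= test_prob p t b.
Proof.
move=> p0 ct b; apply: sumr_ge0 => i _; have /andP[t0 t1] := ct i.
by case: b; rewrite mulr_ge0 // subr_ge0.
Qed.

Lemma test_prob_indicator p A b :
  test_prob p (indicator A) b = \sum_(i in if b then A else ~: A) p i.
Proof.
rewrite big_mkcond; apply: eq_bigr => i _; rewrite /indicator.
by case: b; rewrite ?inE; case: (i \in A); rewrite /= ?subrr ?subr0 ?mulr1 ?mulr0.
Qed.

Lemma test_prob_convex p u v l :
  test_prob p (fun i => l * u i + (1 - l) * v i) =
  (fun b => l * test_prob p u b + (1 - l) * test_prob p v b).
Proof.
apply: funext => b; rewrite /test_prob !mulr_sumr -big_split /=.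
by apply: eq_bigr => i _; case: b; ring.
Qed.

Section ConcaveOnCtests.
Variable F : (I -> R) -> R.
Hypothesis F_concave : forall u v l, is_ctest u -> is_ctest v -> 0 <= l <= 1 ->
  l * F u + (1 - l) * F v <= F (fun i => l * u i + (1 - l) * v i).

Lemma concave_round_coord t i : is_ctest t ->
  exists b : bool, F (fun j => if j == i then b%:R else t j) <= F t.
Proof.
move=> ct; pose t_ (b : bool) j : R := if j == i then b%:R else t j.
have ct_ b : is_ctest (t_ b).
  by move=> j; rewrite /t_; case: (j == i); rewrite // ler0n lern1 leq_b1.
have conc := F_concave (ct_ true) (ct_ false) (ct i).
rewrite (_ : (fun j => _) = t) in conc; last first.
  by apply: funext => j; rewrite /t_; case: eqVneq => [->|_] /=; ring.
have /andP[t0 t1] := ct i.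
have [le_tf|lt_ft] := lerP (F (t_ true)) (F (t_ false)).
  exists true; apply: le_trans conc; rewrite -/(t_ true).
  have : 0 <= (1 - t i) * (F (t_ false) - F (t_ true)) by rewrite mulr_ge0 ?subr_ge0.
  lra.
exists false; apply: le_trans conc; rewrite -/(t_ false).
have : 0 <= t i * (F (t_ true) - F (t_ false)) by rewrite mulr_ge0 // subr_ge0 ltW.
lra.
Qed.

Lemma concave_min_indicator t : is_ctest t -> exists A, F (indicator A) <= F t.
Proof.
(* Round the coordinates listed in s one at a time; all others are already 0 or 1. *)
suff rounded (s : seq I) u : is_ctest u -> (forall j, j \notin s -> u j = (u j == 1)%:R) ->
    exists A, F (indicator A) <= F u.
  by move=> ct; apply: (rounded (enum I)) => // j; rewrite mem_enum.
elim: s u => [|i s IH] u cu u01.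
  exists [set j | u j == 1]; have -> // : indicator [set j | u j == 1] = u.
  by apply: funext => j; rewrite /indicator inE -u01.
have [b Fb] := concave_round_coord i cu.
have [A FA] : exists A, F (indicator A) <= F (fun j => if j == i then b%:R else u j).
  apply: IH => j.
    by case: (j == i); rewrite // ler0n lern1 leq_b1.
  case: eqVneq => [_ _|ji]; first by case: (b); rewrite /= ?eqxx // eq_sym oner_eq0.
  by move=> js; apply: u01; rewrite in_cons negb_or ji.
by exists A; apply: le_trans Fb.
Qed.

End ConcaveOnCtests.
End ClassicalTests.

Arguments indicator {R I} A.

Section RenyiOfOverlap.
Variable R : realType.
Implicit Types a s : R.

Definition renyiQ a s : \bar R :=
  if s == 0 then +oo%E else ((a - 1)^-1 * ln s)%:E.

Lemma renyiE (I : finType) a (p q : I -> R) : renyi a p q = renyiQ a (overlap a p q).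
Proof. by []. Qed.

Lemma overlap_ge0 (I : finType) a (p q : I -> R) : 0 <= overlap a p q.
Proof. by apply: sumr_ge0 => i _; apply: gmean_ge0. Qed.

Lemma renyiQ_le a s1 s2 : a < 1 -> 0 <= s1 -> s1 <= s2 -> (renyiQ a s2 <= renyiQ a s1)%E.
Proof.
move=> a1 s1_ge0 s12; rewrite /renyiQ.
have [s1_eq0|s1_neq0] := eqVneq s1 0; first by rewrite leey.
have s1_gt0 : 0 < s1 by rewrite lt_def s1_neq0.
rewrite gt_eqF ?(lt_le_trans s1_gt0) // lee_fin ler_wnM2l ?ler_ln ?posrE ?(lt_le_trans s1_gt0) //.
by rewrite invr_le0 subr_le0 ltW.
Qed.

Lemma renyiQ_inj a s1 s2 : a != 1 -> 0 <= s1 -> 0 <= s2 -> renyiQ a s1 = renyiQ a s2 -> s1 = s2.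
Proof.
move=> a_neq1 s1_ge0 s2_ge0; rewrite /renyiQ.
have inv_neq0 : (a - 1)^-1 != 0 by rewrite invr_eq0 subr_eq0.
case: eqVneq => [->|s1_neq0]; case: eqVneq => [->|s2_neq0] // [].
by move/(mulfI inv_neq0)/ln_inj; apply; rewrite posrE lt_def ?s1_neq0 ?s2_neq0.
Qed.

End RenyiOfOverlap.

Section OverlapOfTests.
Variables (R : realType) (I : finType) (a : R).
Hypothesis a01 : 0 < a < 1.
Variables p q : I -> R.
Hypotheses (p_ge0 : forall i, 0 <= p i) (q_ge0 : forall i, 0 <= q i).

Local Notation F t := (overlap a (test_prob p t) (test_prob q t)).

Lemma overlap_test_concave u v l : is_ctest u -> is_ctest v -> 0 <= l <= 1 ->
  l * F u + (1 - l) * F v <= F (fun i => l * u i + (1 - l) * v i).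
Proof.
move=> cu cv l01; rewrite !test_prob_convex.
by apply: overlap_concave => //; apply: test_prob_ge0.
Qed.

Lemma overlap_split (A : {set I}) : overlap a p q =
  \sum_(i in A) gmean a (p i) (q i) + \sum_(i in ~: A) gmean a (p i) (q i).
Proof.
rewrite /overlap (bigID (mem A)) /=; congr (_ + _).
by apply: eq_bigl => i; rewrite inE.
Qed.

Lemma overlap_test_indicator (A : {set I}) : F (indicator A) =
  gmean a (\sum_(i in A) p i) (\sum_(i in A) q i) +
  gmean a (\sum_(i in ~: A) p i) (\sum_(i in ~: A) q i).
Proof. by rewrite /overlap big_bool !test_prob_indicator. Qed.

Lemma overlap_le_test_indicator (A : {set I}) : overlap a p q <= F (indicator A).
Proof. by rewrite (overlap_split A) overlap_test_indicator lerD ?hoelder_gmean. Qed.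

Lemma overlap_le_test t : is_ctest t -> overlap a p q <= F t.
Proof.
move=> ct; have [A FA] := concave_min_indicator overlap_test_concave ct.
exact: le_trans (overlap_le_test_indicator A) FA.
Qed.

Lemma overlap_test_indicatorP (A : {set I}) : overlap a p q = F (indicator A) <->
  proportional_on p q A /\ proportional_on p q (~: A).
Proof.
rewrite (overlap_split A) overlap_test_indicator.
rewrite -(hoelder_gmean_eqP a01 A p_ge0 q_ge0) -(hoelder_gmean_eqP a01 (~: A) p_ge0 q_ge0).
have := hoelder_gmean a01 A p_ge0 q_ge0; have := hoelder_gmean a01 (~: A) p_ge0 q_ge0.
by split => [|[-> ->]] //; split; lra.
Qed.

Lemma cDtest_le_renyi : (cDtest a p q <= renyi a p q)%E.
Proof.
have /andP[_ a1] := a01; apply: ge_ereal_sup => _ [t ct <-].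
by rewrite !renyiE renyiQ_le ?overlap_ge0 ?overlap_le_test.
Qed.

Lemma cDtest_attained : exists A, cDtest a p q =
  renyi a (test_prob p (indicator A)) (test_prob q (indicator A)).
Proof.
have /andP[_ a1] := a01.
case: (@arg_minP _ _ _ [set: I]%SET predT (fun A => F (indicator A)) isT) => A0 _ A0_min.
exists A0; apply/eqP; rewrite eq_le; apply/andP; split.
  apply: ge_ereal_sup => _ [t ct <-]; rewrite !renyiE renyiQ_le ?overlap_ge0 //.
  have [A FA] := concave_min_indicator overlap_test_concave ct.
  exact: le_trans (A0_min A isT) FA.
by apply: ereal_sup_ubound; exists (indicator A0) => //; apply: is_ctest_indicator.
Qed.

Lemma cDtest_eq_renyiP : cDtest a p q = renyi a p q <->
  exists A, proportional_on p q A /\ proportional_on p q (~: A).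
Proof.
have /andP[_ a1] := a01; split.
  move=> E; have [A EA] := cDtest_attained; exists A.
  apply/overlap_test_indicatorP; apply: (renyiQ_inj (a := a)); rewrite ?lt_eqF ?overlap_ge0 //.
  by rewrite -!renyiE -E EA.
case=> A /overlap_test_indicatorP eqA; apply/eqP; rewrite eq_le cDtest_le_renyi /=.
by apply: ereal_sup_ubound; exists (indicator A); rewrite ?renyiE -?eqA //; apply: is_ctest_indicator.
Qed.

End OverlapOfTests.

Section DiagonalStates.
Variable R : realType.
Local Notation C := R[i].

Lemma Re_tr_diag_mul n (p : 'I_n -> R) (M : 'M[C]_n) :
  complex.Re (\tr (diag_state p *m M)) = \sum_i p i * complex.Re (M i i).
Proof.
rewrite /diag_state mul_diag_mx /mxtrace raddf_sum; apply: eq_bigr => i _.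
by rewrite !mxE; case: (M i i) => u v /=; rewrite mul0r subr0.
Qed.

Lemma test_dist_diag n (p : 'I_n -> R) (T : 'M[C]_n) :
  test_dist (diag_state p) T = test_prob p (fun i => complex.Re (T i i)).
Proof.
apply: funext => b; rewrite /test_dist /test_prob !Re_tr_diag_mul.
by case: b => //; apply: eq_bigr => i _; rewrite !mxE eqxx raddfB.
Qed.

Lemma quad_form_delta n (M : 'M[C]_n) i :
  ((delta_mx 0 i : 'rV[C]_n) *m M *m adjmx (delta_mx 0 i : 'rV[C]_n)) 0 0 = M i i.
Proof.
have -> : adjmx (delta_mx 0 i : 'rV[C]_n) = delta_mx i 0.
  by apply/matrixP => j k; rewrite /adjmx !mxE conjC_nat andbC.
by rewrite -rowE -colE !mxE.
Qed.

Lemma ctest_of_test n (T : 'M[C]_n) : is_test T -> is_ctest (fun i => complex.Re (T i i)).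
Proof.
case=> [[_ T_ge0] [_ T_le1]] i.
have := T_ge0 (delta_mx 0 i); have := T_le1 (delta_mx 0 i).
rewrite !quad_form_delta !lecE /= !mxE eqxx /= raddfB => /andP[_ le1] /andP[_ ge0].
by move: le1; rewrite raddfB /= ge0 subr_ge0.
Qed.

Lemma psdmx_diag n (r : 'I_n -> R) : (forall i, 0 <= r i) -> psdmx (diag_state r).
Proof.
move=> r_ge0; split.
  apply/matrixP => i j; rewrite /adjmx /diag_state !mxE eq_sym.
  by case: eqVneq => [->|_]; [exact: conjc_real | rewrite !mulr0n rmorph0].
move=> v; rewrite /diag_state mul_mx_diag !mxE; apply: sumr_ge0 => j _.
by rewrite !mxE mulrAC mulrC mulr_ge0 ?ler0c ?mul_conjC_ge0.
Qed.

Lemma is_test_diag n (t : 'I_n -> R) : is_ctest t -> is_test (diag_state t).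
Proof.
move=> ct; split; first by apply: psdmx_diag => i; case/andP: (ct i).
have -> : 1%:M - diag_state t = diag_state (fun i => 1 - t i).
  apply/matrixP => i j; rewrite /diag_state !mxE.
  by case: (i == j); rewrite ?mulr1n ?mulr0n ?subr0 // raddfB.
by apply: psdmx_diag => i; case/andP: (ct i) => _; rewrite subr_ge0.
Qed.

Lemma Dtest_diag n a (p q : 'I_n -> R) :
  Dtest (diag_state p) (diag_state q) a = cDtest a p q.
Proof.
rewrite /Dtest /cDtest; congr ereal_sup; apply/seteqP; split.
  move=> _ [T T_test <-]; exists (fun i => complex.Re (T i i)); last by rewrite !test_dist_diag.
  exact: ctest_of_test.
move=> _ [t ct <-]; exists (diag_state t); first exact: is_test_diag.
by rewrite !test_dist_diag; congr renyi; congr test_prob;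
  apply: funext => i; rewrite !mxE eqxx mulr1n.
Qed.

End DiagonalStates.

Definition tens_prob (R : realType) m n (f : 'I_m -> R) (g : 'I_n -> R) : 'I_(m * n) -> R :=
  fun k => f (mxtens_unindex k).1 * g (mxtens_unindex k).2.

Fixpoint ntens_prob (R : realType) d (f : 'I_d -> R) k : 'I_(d ^ k.+1) -> R :=
  if k is k'.+1 return 'I_(d ^ k.+1) -> R then tens_prob f (@ntens_prob R d f k') else f.

Arguments ntens_prob {R d} f k.

Section TensorPowers.
Variable R : realType.

Lemma tensmx_diag m n (f : 'I_m -> R) (g : 'I_n -> R) :
  tensmx (diag_state f) (diag_state g) = diag_state (tens_prob f g).
Proof.
apply/matrixP => i j; rewrite /diag_state /tens_prob !mxE.
have [<-|nij] := eqVneq i j; first by rewrite !eqxx !mulr1n rmorphM.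
have : mxtens_unindex i != mxtens_unindex j.
  by apply: contra nij => /eqP /(can_inj (@mxtens_unindexK m n)) ->.
case: (mxtens_unindex i) (mxtens_unindex j) => [i1 i2] [j1 j2].
by rewrite xpair_eqE negb_and mulr0n => /orP[] /negbTE -> /=; rewrite mulr0n ?mul0r ?mulr0.
Qed.

Lemma ntensmx_diag d (f : 'I_d -> R) k :
  ntensmx (diag_state f) k.+1 = diag_state (ntens_prob f k).
Proof. by elim: k => [|k IH] //; rewrite ntensmxSS IH tensmx_diag. Qed.

Lemma ntens_prob_ge0 d (f : 'I_d -> R) k : (forall i, 0 <= f i) -> forall i, 0 <= ntens_prob f k i.
Proof. by move=> f_ge0; elim: k => [|k IH] i //=; rewrite mulr_ge0. Qed.

Lemma overlap_tens a m n (f g : 'I_m -> R) (f' g' : 'I_n -> R) :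
  (forall i, 0 <= f i) -> (forall i, 0 <= g i) ->
  (forall i, 0 <= f' i) -> (forall i, 0 <= g' i) ->
  overlap a (tens_prob f f') (tens_prob g g') = overlap a f g * overlap a f' g'.
Proof. by move=> *; rewrite /overlap mulr_sum; apply: eq_bigr => k _; rewrite gmeanMM. Qed.

Lemma overlap_ntens a d (p q : 'I_d -> R) k : (forall i, 0 <= p i) -> (forall i, 0 <= q i) ->
  overlap a (ntens_prob p k) (ntens_prob q k) = overlap a p q ^+ k.+1.
Proof.
move=> p_ge0 q_ge0; elim: k => [|k IH]; first by rewrite expr1.
have -> : overlap a (ntens_prob p k.+1) (ntens_prob q k.+1) =
  overlap a (tens_prob p (ntens_prob p k)) (tens_prob q (ntens_prob q k)) by [].
by rewrite overlap_tens ?IH ?exprS //; apply: ntens_prob_ge0.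
Qed.

End TensorPowers.

Lemma renyiQX (R : realType) (a s : R) k : 0 <= s ->
  (((k.+1)%:R^-1 : R)%:E * renyiQ a (s ^+ k.+1) = renyiQ a s)%E.
Proof.
move=> s_ge0; rewrite /renyiQ expf_eq0 /=; case: ifPn => [_|s_neq0].
  by rewrite mulry gtr0_sg ?invr_gt0 ?ltr0Sn // mul1e.
by rewrite -EFinM lnXn ?lt_def ?s_neq0 // -[ln s *+ _]mulr_natl mulrCA mulKf ?pnatr_eq0.
Qed.

Lemma Dtest_le_hat (R : realType) n (rho sigma : 'M[R[i]]_n) a :
  (Dtest rho sigma a <= Dtest_hat rho sigma a)%E.
Proof. by apply: ereal_sup_ubound; exists 0%N => //; rewrite invr1 mul1e. Qed.

Lemma Dtest_hat_diag_le (R : realType) d a (p q : 'I_d -> R) : 0 < a < 1 ->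
  (forall i, 0 <= p i) -> (forall i, 0 <= q i) ->
  (Dtest_hat (diag_state p) (diag_state q) a <= renyi a p q)%E.
Proof.
move=> a01 p_ge0 q_ge0; apply: ge_ereal_sup => _ [k _ <-].
rewrite !ntensmx_diag Dtest_diag renyiE -(renyiQX a k (overlap_ge0 a p q)).
rewrite -overlap_ntens // -renyiE lee_wpmul2l ?lee_fin ?invr_ge0 //.
(* The index types produced by ntensmx and ntens_prob agree only up to conversion. *)
exact (cDtest_le_renyi a01 (ntens_prob_ge0 (k := k) p_ge0) (ntens_prob_ge0 (k := k) q_ge0)).
Qed.

Theorem mainTheorem10 (R : realType) (d : nat) (p q : 'I_d -> R) :
  is_prob p -> is_prob q ->
  let rho := diag_state p in
  let sigma := diag_state q in
  ((forall a : R, 0 < a < 1 -> Dtest rho sigma a = renyi a p q) <->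
   (exists a : R, 0 < a < 1 /\ Dtest rho sigma a = renyi a p q)) /\
  ((exists a : R, 0 < a < 1 /\ Dtest rho sigma a = renyi a p q) <->
   (exists Om0 : {set 'I_d},
      (forall w, w \in Om0 ->
         (\sum_(x in Om0) q x) * p w = (\sum_(x in Om0) p x) * q w) /\
      (forall w, w \in ~: Om0 ->
         (\sum_(x in ~: Om0) q x) * p w = (\sum_(x in ~: Om0) p x) * q w))) /\
  ((exists Om0 : {set 'I_d},
      (forall w, w \in Om0 ->
         (\sum_(x in Om0) q x) * p w = (\sum_(x in Om0) p x) * q w) /\
      (forall w, w \in ~: Om0 ->
         (\sum_(x in ~: Om0) q x) * p w = (\sum_(x in ~: Om0) p x) * q w)) ->
   forall a : R, 0 < a < 1 ->
     Dtest rho sigma a = Dtest_hat rho sigma a /\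
     Dtest_hat rho sigma a = renyi a p q).
Proof.
move=> [p_ge0 _] [q_ge0 _] rho sigma.
have half01 : 0 < (2^-1 : R) < 1 by apply/andP; split; lra.
have eq_renyiP a : 0 < a < 1 -> Dtest rho sigma a = renyi a p q <->
    exists Om0, proportional_on p q Om0 /\ proportional_on p q (~: Om0).
  by move=> a01; rewrite /rho /sigma Dtest_diag; apply: cDtest_eq_renyiP.
split; [|split].
- split => [all_eq | [a [a01 /(eq_renyiP a a01) prop]] b b01].
    by exists 2^-1; split; last apply: all_eq.
  exact/(eq_renyiP b b01).
- split => [[a [a01 /(eq_renyiP a a01)]] // | prop].
  by exists 2^-1; split; last apply/(eq_renyiP _ half01).
- move=> prop a a01; have Ea := proj2 (eq_renyiP a a01) prop.
  have hat_le := Dtest_hat_diag_le a01 p_ge0 q_ge0.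
  have hat_eq : Dtest_hat rho sigma a = renyi a p q.
    by apply/le_anti; rewrite hat_le -Ea Dtest_le_hat.
  by rewrite hat_eq Ea.
Qed.
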